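(* Let $(V,E,\sigma)$ be an influence graph and let $\mu : V \rightarrow \{+,-\}$ be a (partial) vertex labeling. If $W\subseteq V$ is a Minimal Inconsistent Core, then there is an answer set $X$ of the disjunctive logic program $P_D\cup\tau((V,E,\sigma),\mu)$ such that $\{i \mid \mathit{active}(i)\in X\}=W$.
   Context: An influence graph is a triple $(V,E,\sigma)$ where $V$ is a finite set of vertices, $E\subseteq V\times V$ is a set of directed edges (an edge from $j$ to $i$ is written $j\rightarrow i$), and $\sigma : E\rightarrow\{+,-\}$ is a partial labeling of the edges; in addition, some vertices of $V$ are designated as input vertices. Signs are multiplied as numbers ($++=--=+$, $+-=-+=-$). Given a partial vertex labeling $\mu:V\rightarrow\{+,-\}$ and total labelings $\sigma':E\rightarrow\{+,-\}$, $\mu':V\rightarrow\{+,-\}$, the value $\mu'(i)$ is called consistent if there is an edge $j\rightarrow i$ in $E$ with $\mu'(i)=\mu'(j)\sigma'(j,i)$. A subset $W\subseteq V$ is a Minimal Inconsistent Core (MIC) if (1) for all total extensions $\sigma'$ of $\sigma$ and $\mu'$ of $\mu$ there is some non-input vertex $i\in W$ such that $\mu'(i)$ is inconsistent, and (2) for every proper subset $W'\subset W$ there are total extensions $\sigma'$ of $\sigma$ and $\mu'$ of $\mu$ such that $\mu'(i)$ is consistent for every non-input vertex $i\in W'$. Answer set semantics: a disjunctive logic program is a set of rules $a_1;\dots;a_l \leftarrow b_1,\dots,b_m,\mathit{not}\ c_1,\dots,\mathit{not}\ c_n$ (with $l=0$ giving an integrity constraint, whose empty head is false). Rules with (capitalized)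 variables stand for all their ground instances obtained by substituting constants occurring in the program; a built-in comparison such as $S\neq T$ keeps only instances where the substituted constants differ. A conditional literal $\mathit{opposite}(U,V):\mathit{edge}(U,V)$ in a body, for fixed $V=v$, stands for the conjunction of all atoms $\mathit{opposite}(u,v)$ such that $\mathit{edge}(u,v)$ is a fact of the program (the empty conjunction if there is none). For a set $X$ of ground atoms, the reduct $P^X$ consists of $\{a_1,\dots,a_l\}\leftarrow b_1,\dots,b_m$ for each ground rule with $\{c_1,\dots,c_n\}\cap X=\emptyset$; $X$ is an answer set of $P$ if it is a $\subseteq$-minimal model of $P^X$. Here $+$ and $-$ are constants and vertex names are constants. The instance $\tau((V,E,\sigma),\mu)$ is the set of facts: $\mathit{vertex}(i)$ for each $i\in V$; $\mathit{edge}(j,i)$ for each $j\rightarrow i$ in $E$; $\mathit{observedE}(j,i,s)$ whenever $\sigma(j,i)=s$ is defined; $\mathit{observedV}(i,s)$ whenever $\mu(i)=s$ is defined; $\mathit{input}(i)$ for each input vertex $i$. The program $P_D$ consists of the rules $\mathit{labelV}(V,S)\leftarrow \mathit{observedV}(V,S)$; $\mathit{labelE}(U,V,S)\leftarrow \mathit{observedE}(U,V,S)$; $\mathit{active}(V);\mathit{inactive}(V)\leftarrow \mathit{vertex}(V),\mathit{not}\ \mathit{input}(V)$; $\mathit{edgeMIC}(U,V)\leftarrow \mathit{edge}(U,V),\mathit{active}(V)$; $\mathit{vertexMIC}(U)\leftarrow \mathit{edgeMIC}(U,V)$; $\mathit{vertexMIC}(V)\leftarrow \mathit{active}(V)$;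 $\mathit{labelV}(V,+);\mathit{labelV}(V,-)\leftarrow \mathit{vertexMIC}(V)$; $\mathit{labelE}(U,V,+);\mathit{labelE}(U,V,-)\leftarrow \mathit{edgeMIC}(U,V)$; $\mathit{opposite}(U,V)\leftarrow \mathit{labelE}(U,V,-),\mathit{labelV}(U,S),\mathit{labelV}(V,S)$; $\mathit{opposite}(U,V)\leftarrow \mathit{labelE}(U,V,+),\mathit{labelV}(U,S),\mathit{labelV}(V,T),S\neq T$; $\mathit{bottom}\leftarrow \mathit{active}(V),\mathit{opposite}(U,V):\mathit{edge}(U,V)$; $\leftarrow \mathit{not}\ \mathit{bottom}$; $\mathit{labelV}(V,+)\leftarrow \mathit{bottom},\mathit{vertex}(V)$; $\mathit{labelV}(V,-)\leftarrow \mathit{bottom},\mathit{vertex}(V)$; $\mathit{labelE}(U,V,+)\leftarrow \mathit{bottom},\mathit{edge}(U,V)$; $\mathit{labelE}(U,V,-)\leftarrow \mathit{bottom},\mathit{edge}(U,V)$; $\mathit{labelV'}(W,V,+);\mathit{labelV'}(W,V,-)\leftarrow \mathit{active}(W),\mathit{vertexMIC}(V)$; $\mathit{labelE'}(W,U,V,+);\mathit{labelE'}(W,U,V,-)\leftarrow \mathit{active}(W),\mathit{edgeMIC}(U,V)$; $\mathit{labelV'}(W,V,S)\leftarrow \mathit{active}(W),\mathit{observedV}(V,S)$; $\mathit{labelE'}(W,U,V,S)\leftarrow \mathit{active}(W),\mathit{observedE}(U,V,S)$; $\mathit{receive'}(W,V,+)\leftarrow \mathit{labelE'}(W,U,V,S),\mathit{labelV'}(W,U,S),V\neq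 W$; $\mathit{receive'}(W,V,-)\leftarrow \mathit{labelE'}(W,U,V,S),\mathit{labelV'}(W,U,T),V\neq W,S\neq T$; $\leftarrow \mathit{labelV'}(W,V,S),\mathit{active}(V),V\neq W,\mathit{not}\ \mathit{receive'}(W,V,S)$. *)

From mathcomp Require Import all_boot.
From Stdlib Require Import List.

Set Implicit Arguments.
Unset Strict Implicit.
Unset Printing Implicit Defensive.

Inductive sign := Plus | Minus.

Definition smul (a b : sign) : sign :=
  match a, b with
  | Plus, Plus => Plus
  | Minus, Minus => Plus
  | _, _ => Minus
  end.

(* An influence graph is given by a finite vertex type V, an edge relation
   E (E j i means the edge j -> i), a partial edge labeling sigma (only its
   values on edges of E are meaningful) and a set of input vertices. *)

Section Influence.
Variables (V : finType) (E : rel V) (sigma : V -> V -> option sign)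
          (input : pred V) (mu : V -> option sign).

Definition extendsE (sigma' : V -> V -> sign) : Prop :=
  forall j i s, E j i -> sigma j i = Some s -> sigma' j i = s.

Definition extendsV (mu' : V -> sign) : Prop :=
  forall i s, mu i = Some s -> mu' i = s.

Definition consistent (sigma' : V -> V -> sign) (mu' : V -> sign) (i : V) :=
  exists j, E j i /\ mu' i = smul (mu' j) (sigma' j i).

Definition isMIC (W : {set V}) : Prop :=
  (forall sigma' mu', extendsE sigma' -> extendsV mu' ->
     exists i, i \in W /\ ~~ input i /\ ~ consistent sigma' mu' i)
  /\
  (forall W' : {set V}, W' \proper W ->
     exists sigma' mu', extendsE sigma' /\ extendsV mu' /\
       forall i, i \in W' -> ~~ input i -> consistent sigma' mu' i).

End Influence.

Record rule (A : Type) := mkRule { head : list A; pos : list A; neg : list A }.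
Arguments mkRule {A}.

Definition program (A : Type) := rule A -> Prop.

(* M is a model of the negation-free program P (empty head = false) *)
Definition is_model (A : Type) (P : program A) (M : A -> Prop) : Prop :=
  forall r, P r -> (forall b, In b (pos r) -> M b) ->
    exists h, In h (head r) /\ M h.

Definition reduct (A : Type) (P : program A) (X : A -> Prop) : program A :=
  fun r' => exists r, P r /\ (forall c, In c (neg r) -> ~ X c) /\
                      r' = mkRule (head r) (pos r) nil.

Definition answer_set (A : Type) (P : program A) (X : A -> Prop) : Prop :=
  is_model (reduct P X) X /\
  forall Y : A -> Prop, (forall a, Y a -> X a) ->
    is_model (reduct P X) Y -> forall a, X a -> Y a.

Definition union_prog (A : Type) (P Q : program A) : program A :=
  fun r => P r \/ Q r.

Section Encoding.
Variable V : finType.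

Inductive const := CV of V | CPlus | CMinus.

Definition csign (s : sign) : const :=
  match s with Plus => CPlus | Minus => CMinus end.

Inductive atom :=
| a_vertex of const
| a_edge of const & const
| a_observedE of const & const & const
| a_observedV of const & const
| a_input of const
| a_labelV of const & const
| a_labelE of const & const & const
| a_active of const
| a_inactive of const
| a_edgeMIC of const & const
| a_vertexMIC of const
| a_opposite of const & const
| a_bottom
| a_labelV' of const & const & const
| a_labelE' of const & const & const & const
| a_receive' of const & const & const.

Notation R := (@mkRule atom).

Variables (E : rel V) (sigma : V -> V -> option sign)
          (input : pred V) (mu : V -> option sign).

Definition edgeC (c d : const) : bool :=
  match c, d with CV j, CV i => E j i | _, _ => false end.

Inductive tau : program atom :=
| t_vertex i : tau (R [:: a_vertex (CV i)] nil nil)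
| t_edge j i : E j i -> tau (R [:: a_edge (CV j) (CV i)] nil nil)
| t_observedE j i s : E j i -> sigma j i = Some s ->
    tau (R [:: a_observedE (CV j) (CV i) (csign s)] nil nil)
| t_observedV i s : mu i = Some s ->
    tau (R [:: a_observedV (CV i) (csign s)] nil nil)
| t_input i : input i -> tau (R [:: a_input (CV i)] nil nil).

(* All ground instances of P_D over the constants of the program. *)
Inductive PD : program atom :=
| r1 v s : PD (R [:: a_labelV v s] [:: a_observedV v s] nil)
| r2 u v s : PD (R [:: a_labelE u v s] [:: a_observedE u v s] nil)
| r3 v : PD (R [:: a_active v; a_inactive v] [:: a_vertex v] [:: a_input v])
| r4 u v : PD (R [:: a_edgeMIC u v] [:: a_edge u v; a_active v] nil)
| r5 u v : PD (R [:: a_vertexMIC u] [:: a_edgeMIC u v] nil)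
| r6 v : PD (R [:: a_vertexMIC v] [:: a_active v] nil)
| r7 v : PD (R [:: a_labelV v CPlus; a_labelV v CMinus] [:: a_vertexMIC v] nil)
| r8 u v : PD (R [:: a_labelE u v CPlus; a_labelE u v CMinus]
                 [:: a_edgeMIC u v] nil)
| r9 u v s : PD (R [:: a_opposite u v]
                   [:: a_labelE u v CMinus; a_labelV u s; a_labelV v s] nil)
| r10 u v s t : s <> t ->
    PD (R [:: a_opposite u v]
          [:: a_labelE u v CPlus; a_labelV u s; a_labelV v t] nil)
(* bottom <- active(V), opposite(U,V) : edge(U,V) *)
| r11 v : PD (R [:: a_bottom]
                (a_active v :: [seq a_opposite (CV u) v | u <- enum V & edgeC (CV u) v])
                nil)
| r12 : PD (R nil nil [:: a_bottom])
| r13 v : PD (R [:: a_labelV v CPlus] [:: a_bottom; a_vertex v] nil)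
| r14 v : PD (R [:: a_labelV v CMinus] [:: a_bottom; a_vertex v] nil)
| r15 u v : PD (R [:: a_labelE u v CPlus] [:: a_bottom; a_edge u v] nil)
| r16 u v : PD (R [:: a_labelE u v CMinus] [:: a_bottom; a_edge u v] nil)
| r17 w v : PD (R [:: a_labelV' w v CPlus; a_labelV' w v CMinus]
                  [:: a_active w; a_vertexMIC v] nil)
| r18 w u v : PD (R [:: a_labelE' w u v CPlus; a_labelE' w u v CMinus]
                    [:: a_active w; a_edgeMIC u v] nil)
| r19 w v s : PD (R [:: a_labelV' w v s] [:: a_active w; a_observedV v s] nil)
| r20 w u v s : PD (R [:: a_labelE' w u v s]
                      [:: a_active w; a_observedE u v s] nil)
| r21 w u v s : v <> w ->
    PD (R [:: a_receive' w v CPlus] [:: a_labelE' w u v s; a_labelV' w u s] nil)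
| r22 w u v s t : v <> w -> s <> t ->
    PD (R [:: a_receive' w v CMinus] [:: a_labelE' w u v s; a_labelV' w u t] nil)
| r23 w v s : v <> w ->
    PD (R nil [:: a_labelV' w v s; a_active v] [:: a_receive' w v s]).

Definition PD_tau : program atom := union_prog PD tau.

End Encoding.

(* The answer set is read off W: active(i) exactly for i in W, inactive(i) for the other
   non-input vertices, bottom together with every label (the saturation rules force all of
   them), and, for each active w, primed labels recording total labelings that extend mu
   and sigma and are consistent on W minus w; such labelings exist by minimality of W, and
   they satisfy every receive' constraint. Conversely, a smaller model Y of the reduct
   contains the facts and the active atoms, and the labels Y picks give total extensions of
   mu and sigma; since W is inconsistent, some vertex of W has only opposite incoming edges
   under them, which derives bottom in Y, and then saturation recovers everything else. *)

From Pilot Require Import Defs.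
From mathcomp Require Import all_boot.
From Stdlib Require Import List ClassicalEpsilon.

Set Implicit Arguments.
Unset Strict Implicit.
Unset Printing Implicit Defensive.

Section RuleBodies.
Variables (A : Type) (M : A -> Prop).

Definition holds_all (l : list A) : Prop := foldr (fun a P => M a /\ P) True l.
Definition holds_some (l : list A) : Prop := foldr (fun a P => M a \/ P) False l.

Lemma holds_allP l : holds_all l <-> forall b, In b l -> M b.
Proof.
elim: l => [|a l IHl] /=; first by split.
rewrite IHl; split=> [[Ma Hl] b [<-|/Hl]| H] //.
by split=> [|b lb]; apply: H; [left|right].
Qed.

Lemma holds_someP l : holds_some l <-> exists h, In h l /\ M h.
Proof.
elim: l => [|a l IHl] /=; first by split=> // [[h []]].
rewrite IHl; split=> [[Ma | [h [lh Mh]]] | [h [[<- | lh] Mh]]].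
- by exists a; split; first left.
- by exists h; split; first right.
- by left.
- by right; exists h.
Qed.
End RuleBodies.

Lemma In_map_filter (A B : Type) (f : A -> B) (p : pred A) (s : list A) b :
  In b (map f (filter p s)) -> exists2 a, p a & b = f a.
Proof.
elim: s => //= a s IHs; case: ifP => [pa /= [<-|/IHs] | _ /IHs] //.
by exists a.
Qed.

Section Reducts.
Variables (A : Type) (P : program A) (X M : A -> Prop).

Lemma is_model_reductP :
  is_model (reduct P X) M <->
  forall r, P r -> holds_all (fun c => ~ X c) (Defs.neg r) ->
    holds_all M (Defs.pos r) -> holds_some M (Defs.head r).
Proof.
split=> [HM r Pr /holds_allP Hneg /holds_allP Hpos | HM r' [r [Pr [Hneg ->]]] Hpos].
  apply/holds_someP; apply: (HM (mkRule (Defs.head r) (Defs.pos r) nil)) Hpos.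
  by exists r.
by apply/holds_someP; apply: HM Pr _ _; apply/holds_allP.
Qed.

Lemma reduct_model_derives (a : A) (p : list A) :
  is_model (reduct P X) M -> P (mkRule [:: a] p nil) -> holds_all M p -> M a.
Proof. by move/is_model_reductP=> HM Pr Hp; case: (HM _ Pr I Hp) => [|[]]. Qed.

End Reducts.

Section Repairs.
Variables (V : finType) (E : rel V) (sigma : V -> V -> option sign)
          (input : pred V) (mu : V -> option sign).

Definition repairs (U : {set V}) (p : (V -> V -> sign) * (V -> sign)) :=
  [/\ extendsE E sigma p.1, extendsV mu p.2 &
      forall i, i \in U -> ~~ input i -> consistent E p.1 p.2 i].

Variable W : {set V}.
Hypothesis HW : isMIC E sigma input mu W.

Lemma MIC_repairable w : w \in W -> exists p, repairs (W :\ w) p.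
Proof.
by move=> wW; have [s' [m' [? [? ?]]]] := HW.2 _ (properD1 wW); exists (s', m').
Qed.

Lemma MIC_not_input i : i \in W -> ~~ input i.
Proof.
move=> iW; apply/negP => inp_i.
have [[s' m'] [Es' Em' Hc]] := MIC_repairable iW.
have [j [jW [ninp_j]]] := HW.1 _ _ Es' Em'; apply.
apply: Hc (ninp_j); rewrite in_setD1 jW andbT.
by apply: contraNneq ninp_j => ->.
Qed.

Definition repair w : (V -> V -> sign) * (V -> sign) :=
  epsilon (inhabits (fun _ _ => Plus, fun _ => Plus)) (repairs (W :\ w)).

Lemma repairP w : w \in W -> repairs (W :\ w) (repair w).
Proof. by move=> wW; apply: epsilon_spec; exact: MIC_repairable. Qed.

End Repairs.

Section Candidate.
Variables (V : finType) (E : rel V) (sigma : V -> V -> option sign)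
          (input : pred V) (mu : V -> option sign) (W : {set V}).
Hypothesis HW : isMIC E sigma input mu W.

Local Notation cs := (csign V).
Local Notation repair_sigma w := (repair E sigma input mu W w).1.
Local Notation repair_mu w := (repair E sigma input mu W w).2.

Definition is_sign (c : const V) := c = CPlus V \/ c = CMinus V.

Lemma csign_is_sign s : is_sign (cs s).
Proof. by case: s; [left | right]. Qed.

Lemma csign_inj : injective cs.
Proof. by move=> [] [] // []. Qed.

Definition core_incident v := v \in W \/ exists2 j, E v j & j \in W.
Definition primed_vertex v := core_incident v \/ mu v <> None.
Definition primed_edge u v := E u v /\ (v \in W \/ sigma u v <> None).

(* Atoms over ill-sorted constants (e.g. a sign in a vertex position) are false. *)
Definition candidate (a : atom V) : Prop :=
  match a with
  | a_vertex (CV i) => True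
  | a_edge (CV j) (CV i) => E j i
  | a_observedE (CV j) (CV i) s => E j i /\ exists2 t, sigma j i = Some t & s = cs t
  | a_observedV (CV i) s => exists2 t, mu i = Some t & s = cs t
  | a_input (CV i) => input i
  | a_labelV (CV i) s => is_sign s
  | a_labelE (CV j) (CV i) s => E j i /\ is_sign s
  | a_active (CV i) => i \in W
  | a_inactive (CV i) => ~~ input i /\ i \notin W
  | a_edgeMIC (CV j) (CV i) => E j i /\ i \in W
  | a_vertexMIC (CV i) => core_incident i
  | a_opposite (CV j) (CV i) => E j i
  | a_bottom => True
  | a_labelV' (CV w) (CV v) s => [/\ w \in W, primed_vertex v & s = cs (repair_mu w v)]
  | a_labelE' (CV w) (CV u) (CV v) s =>
      [/\ w \in W, primed_edge u v & s = cs (repair_sigma w u v)]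
  | a_receive' (CV w) (CV v) s =>
      [/\ w \in W, v <> w & exists2 u, primed_edge u v /\ primed_vertex u &
        s = cs (smul (repair_mu w u) (repair_sigma w u v))]
  | _ => False
  end.

Lemma smul_same a : smul a a = Plus.
Proof. by case: a. Qed.

Lemma smul_diff a b : a <> b -> smul a b = Minus.
Proof. by case: a; case: b. Qed.

Lemma repair_mu_observed w v t : w \in W -> mu v = Some t -> repair_mu w v = t.
Proof. by move=> /(repairP HW) [_ Hmu _] /Hmu. Qed.

Lemma repair_sigma_observed w u v t :
  w \in W -> E u v -> sigma u v = Some t -> repair_sigma w u v = t.
Proof. by move=> /(repairP HW) [Hsigma _ _] /Hsigma Huv /Huv. Qed.

Lemma repair_receives w v : w \in W -> v \in W -> v <> w ->
  candidate (a_receive' (CV w) (CV v) (cs (repair_mu w v))).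
Proof.
move=> wW vW vw; split=> //.
have [_ _ Hc] := repairP HW wW.
have vWw : v \in W :\ w by rewrite in_setD1 vW andbT; apply/eqP.
have [j [Ejv ->]] := Hc v vWw (MIC_not_input HW vW).
by exists j => //; split; [split=> //; left | left; right; exists v].
Qed.

Lemma candidate_PD r : PD E r ->
  holds_all (fun c => ~ candidate c) (Defs.neg r) -> holds_all candidate (Defs.pos r) ->
  holds_some candidate (Defs.head r).
Proof.
case=> [v s|u v s|v|u v|u v|v|v|u v|u v s|u v s t st|v| |v|v|u v|u v|w v|w u v|w v s|w u v s
  |w u v s vw|w u v s t vw st|w v s vw] /=.
- move=> _ [obs _]; case: v obs => // i [t _ ->]; left; exact: csign_is_sign.
- move=> _ [obs _]; case: u obs => // j; case: v => // i [Eji [t _ ->]].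
  by left; split=> //; exact: csign_is_sign.
- move=> [ninp _] [vx _]; case: v ninp vx => //= i ninp _.
  by case: (boolP (i \in W)) => iW; [left | right; left; split=> //; apply/negP].
- move=> _ [Eji [iW _]]; case: u Eji iW => // j; case: v => // i Eji iW; by left.
- move=> _ [emic _]; case: u emic => // j; case: v => // i [Eji iW].
  by left; right; exists i.
- move=> _ [iW _]; case: v iW => // i iW; by left; left.
- move=> _ [vm _]; case: v vm => // i _; by left; left.
- move=> _ [emic _]; case: u emic => // j; case: v => // i [Eji _].
  by left; split=> //; left.
- move=> _ [lE _]; case: u lE => // j; case: v => // i [Eji _]; by left.
- move=> _ [lE _]; case: u lE => // j; case: v => // i [Eji _]; by left.
- by left.
- by move=> [/(_ I)].
- move=> _ [_ [vx _]]; case: v vx => // i _; by left; left.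
- move=> _ [_ [vx _]]; case: v vx => // i _; by left; right.
- move=> _ [_ [Eji _]]; case: u Eji => // j; case: v => // i Eji; by left; split=> //; left.
- move=> _ [_ [Eji _]]; case: u Eji => // j; case: v => // i Eji; by left; split=> //; right.
- move=> _ [wW [vm _]]; case: w wW => // w wW; case: v vm => // v vm.
  by case: (repair_mu w v); [left | right; left]; split=> //; left.
- move=> _ [wW [emic _]]; case: w wW => // w wW; case: u emic => // u; case: v => // v [Euv vW].
  by case: (repair_sigma w u v); [left | right; left]; split=> //; split=> //; left.
- move=> _ [wW [obs _]]; case: w wW => // w wW; case: v obs => // v [t mvt ->].
  by left; split=> //; [right; rewrite mvt | rewrite (repair_mu_observed wW mvt)].
- move=> _ [wW [obs _]]; case: w wW => // w wW; case: u obs => // u; case: v => // v.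
  move=> [Euv [t suv ->]]; left; split=> //; first by split=> //; right; rewrite suv.
  by rewrite (repair_sigma_observed wW Euv suv).
- move=> _ [lE [lV _]]; case: w vw lE lV => // w; case: u => // u; case: v => // v vw.
  move=> [wW uv ->] [_ u' /csign_inj same]; left; split=> //.
    by apply: contra_not vw => ->.
  by exists u => //; rewrite same smul_same.
- move=> _ [lE [lV _]]; case: w vw lE lV => // w; case: u => // u; case: v => // v vw.
  move=> [wW uv Es] [_ u' Et]; left; split=> //.
    by apply: contra_not vw => ->.
  by exists u => //; rewrite smul_diff // => e; apply: st; rewrite Es Et e.
- move=> [nrec _] [lV [vW _]]; case: w vw nrec lV => // w; case: v vW => // v vW vw.
  move=> nrec [wW _ Es]; apply: nrec; rewrite Es; apply: repair_receives => //.
  by apply: contra_not vw => ->.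
Qed.

Lemma candidate_tau r : tau E sigma input mu r -> holds_some candidate (Defs.head r).
Proof.
case=> [i|j i Eji|j i s Eji sji|i s mui|i inp] /=; left => //.
- by split=> //; exists s.
- by exists s.
Qed.

Lemma candidate_model : is_model (reduct (PD_tau E sigma input mu) candidate) candidate.
Proof.
apply/is_model_reductP => r [Pr|Tr] Hneg Hpos; first exact: candidate_PD.
exact: candidate_tau.
Qed.

Section Minimality.
Variable Y : atom V -> Prop.
Hypothesis Y_sub : forall a, Y a -> candidate a.
Hypothesis Y_model : is_model (reduct (PD_tau E sigma input mu) candidate) Y.

Lemma Y_fires r : PD E r -> holds_all (fun c => ~ candidate c) (Defs.neg r) ->
  holds_all Y (Defs.pos r) -> holds_some Y (Defs.head r).
Proof. by move=> Pr; move/is_model_reductP: Y_model; apply; left. Qed.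

Lemma Y_derives a p : PD E (mkRule [:: a] p nil) -> holds_all Y p -> Y a.
Proof. by move=> Pr; apply: (reduct_model_derives Y_model); first left. Qed.

Lemma Y_fact a : tau E sigma input mu (mkRule [:: a] nil nil) -> Y a.
Proof. by move=> Tr; apply: (reduct_model_derives (p := nil) Y_model); first right. Qed.

Lemma Y_vertex i : Y (a_vertex (CV i)).
Proof. exact/Y_fact/t_vertex. Qed.

Lemma Y_edge j i : E j i -> Y (a_edge (CV j) (CV i)).
Proof. by move=> Eji; apply/Y_fact/t_edge. Qed.

Lemma Y_observedE j i s :
  candidate (a_observedE (CV j) (CV i) s) -> Y (a_observedE (CV j) (CV i) s).
Proof. by move=> [Eji [t sji ->]]; apply/Y_fact/t_observedE. Qed.

Lemma Y_observedV i s : candidate (a_observedV (CV i) s) -> Y (a_observedV (CV i) s).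
Proof. by move=> [t mui ->]; apply/Y_fact/t_observedV. Qed.

Lemma Y_input i : input i -> Y (a_input (CV i)).
Proof. by move=> inp; apply/Y_fact/t_input. Qed.

Lemma Y_active_or_inactive i :
  ~~ input i -> Y (a_active (CV i)) \/ Y (a_inactive (CV i)).
Proof.
move=> ninp.
have := Y_fires (r3 E (CV i)) (conj (elimT negP ninp) I) (conj (Y_vertex i) I).
by case=> [|[|[]]]; [left | right].
Qed.

Lemma Y_active i : i \in W -> Y (a_active (CV i)).
Proof.
move=> iW; case: (Y_active_or_inactive (MIC_not_input HW iW)) => // /Y_sub [_].
by rewrite iW.
Qed.

Lemma Y_inactive i : ~~ input i -> i \notin W -> Y (a_inactive (CV i)).
Proof.
move=> ninp niW; case: (Y_active_or_inactive ninp) => // /Y_sub /= iW.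
by rewrite iW in niW.
Qed.

Lemma Y_edgeMIC j i : E j i -> i \in W -> Y (a_edgeMIC (CV j) (CV i)).
Proof.
move=> Eji iW; apply: (Y_derives (r4 E _ _)).
by do !split; [exact: Y_edge | exact: Y_active].
Qed.

Lemma Y_vertexMIC v : core_incident v -> Y (a_vertexMIC (CV v)).
Proof.
case=> [vW | [j Evj jW]]; first by apply: (Y_derives (r6 E _)); split; first exact: Y_active.
by apply: (Y_derives (r5 E _ (CV j))); split; first exact: Y_edgeMIC.
Qed.

Definition Y_mu v : sign :=
  if mu v is Some s then s
  else if excluded_middle_informative (Y (a_labelV (CV v) (CPlus V))) then Plus else Minus.

Definition Y_sigma u v : sign :=
  if sigma u v is Some s then s
  else if excluded_middle_informative (Y (a_labelE (CV u) (CV v) (CPlus V))) then Plus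
  else Minus.

Lemma Y_mu_extends : extendsV mu Y_mu.
Proof. by move=> i s mui; rewrite /Y_mu mui. Qed.

Lemma Y_sigma_extends : extendsE E sigma Y_sigma.
Proof. by move=> j i s _ sji; rewrite /Y_sigma sji. Qed.

Lemma Y_labelV_Y_mu v : core_incident v -> Y (a_labelV (CV v) (cs (Y_mu v))).
Proof.
move=> cv; rewrite /Y_mu; case mv: (mu v) => [s|].
  by apply: (Y_derives (r1 E _ _)); split=> //; apply: Y_observedV; exists s.
case: excluded_middle_informative => // nYp.
have := Y_fires (r7 E (CV v)) I (conj (Y_vertexMIC cv) I).
by case=> [|[|[]]].
Qed.

Lemma Y_labelE_Y_sigma u v : E u v -> v \in W ->
  Y (a_labelE (CV u) (CV v) (cs (Y_sigma u v))).
Proof.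
move=> Euv vW; rewrite /Y_sigma; case suv: (sigma u v) => [s|].
  by apply: (Y_derives (r2 E _ _ _)); split=> //; apply: Y_observedE; split=> //; exists s.
case: excluded_middle_informative => // nYp.
have := Y_fires (r8 E (CV u) (CV v)) I (conj (Y_edgeMIC Euv vW) I).
by case=> [|[|[]]].
Qed.

Lemma Y_opposite_of_labels u i a b s :
  Y (a_labelV (CV u) (cs a)) -> Y (a_labelV (CV i) (cs b)) ->
  Y (a_labelE (CV u) (CV i) (cs s)) -> b <> smul a s -> Y (a_opposite (CV u) (CV i)).
Proof.
move=> Yu Yi; case: s => Yui ne.
- have ab : cs a <> cs b by move/csign_inj=> ab; apply: ne; rewrite -ab; case: (a).
  exact: (Y_derives (r10 E _ _ ab)).
- have ab : b = a by case: (a) (b) ne => [] [].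
  by rewrite ab in Yi; exact: (Y_derives (r9 E _ _ (cs a))).
Qed.

Lemma Y_bottom : Y (a_bottom V).
Proof.
have [i [iW [_ nc]]] := HW.1 _ _ Y_sigma_extends Y_mu_extends.
apply: (Y_derives (r11 E (CV i))); split; first exact: Y_active.
apply/holds_allP => b Hb; have [u /= Eui ->] := In_map_filter Hb.
apply: (Y_opposite_of_labels (Y_labelV_Y_mu _) (Y_labelV_Y_mu _)
                             (Y_labelE_Y_sigma Eui iW)).
- by right; exists i.
- by left.
- by move=> e; apply: nc; exists u.
Qed.

Lemma Y_labelV i s : is_sign s -> Y (a_labelV (CV i) s).
Proof.
case=> ->; [apply: (Y_derives (r13 E _)) | apply: (Y_derives (r14 E _))].
  all: by split; [exact: Y_bottom | split; first exact: Y_vertex].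
Qed.

Lemma Y_labelE j i s : E j i -> is_sign s -> Y (a_labelE (CV j) (CV i) s).
Proof.
move=> Eji [->|->]; [apply: (Y_derives (r15 E _ _)) | apply: (Y_derives (r16 E _ _))].
  all: by split; [exact: Y_bottom | split; first exact: Y_edge].
Qed.

Lemma Y_opposite j i : E j i -> Y (a_opposite (CV j) (CV i)).
Proof.
move=> Eji; apply: (Y_derives (r9 E _ _ (CPlus V))).
by do !split; [apply: (Y_labelE Eji); right | apply: Y_labelV; left ..].
Qed.

Lemma Y_labelV' w v s :
  candidate (a_labelV' (CV w) (CV v) s) -> Y (a_labelV' (CV w) (CV v) s).
Proof.
move=> [wW pv ->].
suff [s' Ys'] : exists s', Y (a_labelV' (CV w) (CV v) s') by case: (Y_sub Ys') => _ _ <-.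
case: pv => [cv | ].
  have := Y_fires (r17 E (CV w) (CV v)) I (conj (Y_active wW) (conj (Y_vertexMIC cv) I)).
  by case=> [|[|[]]]; eexists; eassumption.
case mv: (mu v) => [t|] // _; exists (cs t).
apply: (Y_derives (r19 E _ _ _)); do !split; first exact: Y_active.
by apply: Y_observedV; exists t.
Qed.

Lemma Y_labelE' w u v s :
  candidate (a_labelE' (CV w) (CV u) (CV v) s) -> Y (a_labelE' (CV w) (CV u) (CV v) s).
Proof.
move=> [wW [Euv pe] ->].
suff [s' Ys'] : exists s', Y (a_labelE' (CV w) (CV u) (CV v) s')
  by case: (Y_sub Ys') => _ _ <-.
case: pe => [vW | ].
  have := Y_fires (r18 E (CV w) (CV u) (CV v)) I
    (conj (Y_active wW) (conj (Y_edgeMIC Euv vW) I)).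
  by case=> [|[|[]]]; eexists; eassumption.
case suv: (sigma u v) => [t|] // _; exists (cs t).
apply: (Y_derives (r20 E _ _ _ _)); do !split; first exact: Y_active.
by apply: Y_observedE; split=> //; exists t.
Qed.

Lemma Y_receive'_of_labels w u v a b : v <> w ->
  Y (a_labelE' (CV w) (CV u) (CV v) (cs b)) -> Y (a_labelV' (CV w) (CV u) (cs a)) ->
  Y (a_receive' (CV w) (CV v) (cs (smul a b))).
Proof.
move=> vw YE YV; have vw' : CV v <> CV w by case.
case: a b YE YV => [] [] YE YV.
- by apply: (Y_derives (r21 E (CV u) (CPlus V) vw')); do !split.
- by apply: (Y_derives (@r22 _ E _ (CV u) _ (CMinus V) (CPlus V) vw' _)); do ?split.
- by apply: (Y_derives (@r22 _ E _ (CV u) _ (CPlus V) (CMinus V) vw' _)); do ?split.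
- by apply: (Y_derives (r21 E (CV u) (CMinus V) vw')); do !split.
Qed.

Lemma Y_receive' w v s :
  candidate (a_receive' (CV w) (CV v) s) -> Y (a_receive' (CV w) (CV v) s).
Proof.
move=> [wW vw [u [pe pv] ->]].
by apply: (Y_receive'_of_labels (u := u) vw); [apply: Y_labelE' | apply: Y_labelV'].
Qed.

Lemma candidate_sub_Y a : candidate a -> Y a.
Proof.
move=> Ca; destruct a; repeat match goal with c : const V |- _ => destruct c end;
  simpl in Ca; try contradiction.
all: first [ exact: Y_vertex | exact: Y_bottom | exact: Y_edge Ca
  | exact: Y_observedE Ca | exact: Y_observedV Ca | exact: Y_input Ca
  | exact: Y_labelV Ca | exact: Y_labelE (proj1 Ca) (proj2 Ca) | exact: Y_active Ca
  | exact: Y_inactive (proj1 Ca) (proj2 Ca) | exact: Y_edgeMIC (proj1 Ca) (proj2 Ca)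
  | exact: Y_vertexMIC Ca | exact: Y_opposite Ca | exact: Y_labelV' Ca
  | exact: Y_labelE' Ca | exact: Y_receive' Ca ].
Qed.

End Minimality.

Lemma candidate_answer_set : answer_set (PD_tau E sigma input mu) candidate.
Proof. by split=> [|Y Y_sub Y_model a]; [exact: candidate_model | exact: candidate_sub_Y]. Qed.

End Candidate.

Theorem theorem4 (V : finType) (E : rel V) (sigma : V -> V -> option sign)
    (input : pred V) (mu : V -> option sign) (W : {set V}) :
  isMIC E sigma input mu W ->
  exists X : atom V -> Prop,
    answer_set (PD_tau E sigma input mu) X /\
    (forall c : const V, X (a_active c) <-> exists2 i, c = CV i & i \in W).
Proof.
move=> HW; exists (candidate E sigma input mu W); split; first exact: candidate_answer_set.
case=> [i||] /=; split=> [|[j]] //; first by exists i.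
all: by case=> ->.
Qed.
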